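(* Let $\mathcal L|_{\mathcal S}$ be a class of differential equations which is uniformly semi-normalized with respect to a family $\mathcal N_{\mathcal S}=\{N_\theta\mid\theta\in\mathcal S\}$ of symmetry subgroups. Then for each $\theta\in\mathcal S$ the point symmetry group $G_\theta$ of the system $\mathcal L_\theta$ splits over $N_\theta$. More specifically: $N_\theta$ is a normal subgroup of $G_\theta$; $G^{\mathrm{ess}}_\theta:=G^\sim|_{(x,u)}\cap G_\theta$ is a subgroup of $G_\theta$; and $G_\theta=G^{\mathrm{ess}}_\theta\ltimes N_\theta$ (semidirect product of $G^{\mathrm{ess}}_\theta$ acting on $N_\theta$). Here $G^\sim|_{(x,u)}=\{\mathcal T|_{(x,u)}\mid\mathcal T\in G^\sim\}$.
   Context: Let $x=(x_1,\dots,x_n)$ be independent and $u=(u^1,\dots,u^m)$ dependent variables, and $u_{(p)}$ denote $u$ together with its derivatives of order $\le p$. A class of differential equations $\mathcal L|_{\mathcal S}=\{\mathcal L_\theta\mid\theta\in\mathcal S\}$ consists of systems $\mathcal L_\theta\colon L(x,u_{(p)},\theta_{(q)}(x,u_{(p)}))=0$ of a fixed form, parameterized by a tuple of arbitrary elements $\theta$ running through a set $\mathcal S$ (the solution set of an auxiliary system of differential equations and inequalities). For $\theta\in\mathcal S$, $G_\theta$ is the maximal point symmetry (pseudo)group of $\mathcal L_\theta$, i.e. the group of point transformations in the space of $(x,u)$ preserving the solution set of $\mathcal L_\theta$. The equivalence groupoid $\mathcal G^\sim$ is the set of triples $(\theta,\tilde\theta,\varphi)$ with $\theta,\tilde\theta\in\mathcal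 S$ and $\varphi$ a point transformation in the space of $(x,u)$ mapping $\mathcal L_\theta$ to $\mathcal L_{\tilde\theta}$. The (usual) equivalence group $G^\sim$ is the group of point transformations $\mathcal T$ of the joint space of $(x,u_{(p)},\theta)$ that are projectable to the space of $(x,u_{(p')})$ for every $0\le p'\le p$, preserve the contact structure on the space of $(x,u_{(p)})$, and map every system of the class to a system of the class; $\mathcal T\theta$ denotes the image of the arbitrary element and $\mathcal T|_{(x,u)}$ the restriction of $\mathcal T$ to the space of $(x,u)$. The class $\mathcal L|_{\mathcal S}$ is called uniformly semi-normalized with respect to a family $\mathcal N_{\mathcal S}=\{N_\theta\mid\theta\in\mathcal S\}$, where each $N_\theta$ is a subgroup of $G_\theta$, if: (1) $\mathcal T|_{(x,u)}\notin N_\theta$ for any $\theta\in\mathcal S$ and any $\mathcal T\in G^\sim$ with $\mathcal T\ne\mathrm{id}$; (2) $N_{\mathcal T\theta}=\mathcal T|_{(x,u)}N_\theta(\mathcal T|_{(x,u)})^{-1}$ for any $\theta\in\mathcal S$ and $\mathcal T\in G^\sim$; (3) for any $(\theta^1,\theta^2,\varphi)\in\mathcal G^\sim$ there exist $\varphi^1\in N_{\theta^1}$, $\varphi^2\in N_{\theta^2}$ and $\mathcal T\in G^\sim$ such that $\theta^2=\mathcal T\theta^1$ and $\varphi=\varphi^2\,\mathcal T|_{(x,u)}\,\varphi^1$. *)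

Set Implicit Arguments.

(* X is the space of (x,u); a point transformation is an invertible map. *)
Record ptrans (X : Type) := PT {
  pt_fwd : X -> X;
  pt_bwd : X -> X;
  pt_fwdK : forall x, pt_bwd (pt_fwd x) = x;
  pt_bwdK : forall x, pt_fwd (pt_bwd x) = x }.

Definition pt_id (X : Type) : ptrans X :=
  @PT X (fun x => x) (fun x => x) (fun x => eq_refl) (fun x => eq_refl).

Definition pt_comp (X : Type) (f g : ptrans X) : ptrans X.
Proof.
  refine (@PT X (fun x => pt_fwd f (pt_fwd g x)) (fun x => pt_bwd g (pt_bwd f x)) _ _).
  - intro x. rewrite pt_fwdK. apply pt_fwdK.
  - intro x. rewrite pt_bwdK. apply pt_bwdK.
Defined.

Definition pt_inv (X : Type) (f : ptrans X) : ptrans X :=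
  @PT X (pt_bwd f) (pt_fwd f) (pt_bwdK f) (pt_fwdK f).

Definition is_subgroup (X : Type) (H G : ptrans X -> Prop) : Prop :=
  (forall g, H g -> G g) /\ H (pt_id X) /\
  (forall g h, H g -> H h -> H (pt_comp g h)) /\
  (forall g, H g -> H (pt_inv g)).

Definition is_normal_subgroup (X : Type) (N G : ptrans X -> Prop) : Prop :=
  is_subgroup N G /\
  (forall g n, G g -> N n -> N (pt_comp g (pt_comp n (pt_inv g)))).

Definition is_semidirect (X : Type) (G H N : ptrans X -> Prop) : Prop :=
  is_subgroup H G /\ is_normal_subgroup N G /\
  (forall g, H g -> N g -> g = pt_id X) /\
  (forall g, G g <-> exists h n, H h /\ N n /\ g = pt_comp h n).

(* Theta : type of tuples of arbitrary elements, S : the set of admissible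
   ones, Sol θ : the solution set of L_θ, a solution being represented by
   its graph, a subset of the space X of (x,u). *)
Definition pt_image (X : Type) (phi : ptrans X) (s : X -> Prop) : X -> Prop :=
  fun y => s (pt_bwd phi y).

Definition maps_to (X Theta : Type) (Sol : Theta -> (X -> Prop) -> Prop)
  (th th' : Theta) (phi : ptrans X) : Prop :=
  forall s, Sol th s <-> Sol th' (pt_image phi s).

Definition sym_group (X Theta : Type) (Sol : Theta -> (X -> Prop) -> Prop)
  (th : Theta) : ptrans X -> Prop :=
  fun phi => maps_to Sol th th phi.

Definition equiv_groupoid (X Theta : Type) (S : Theta -> Prop)
  (Sol : Theta -> (X -> Prop) -> Prop) (th th' : Theta) (phi : ptrans X) : Prop :=
  S th /\ S th' /\ maps_to Sol th th' phi.

(* An equivalence transformation T is recorded through its restriction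
   T|_(x,u) and its induced map θ ↦ Tθ on arbitrary elements. *)
Record etrans (X Theta : Type) := ET {
  e_res : ptrans X;
  e_th  : Theta -> Theta }.

Definition e_id (X Theta : Type) : etrans X Theta :=
  @ET X Theta (pt_id X) (fun th => th).

Definition e_comp (X Theta : Type) (T U : etrans X Theta) : etrans X Theta :=
  @ET X Theta (pt_comp (e_res T) (e_res U)) (fun th => e_th T (e_th U th)).

Definition is_equiv_group (X Theta : Type) (S : Theta -> Prop)
  (Sol : Theta -> (X -> Prop) -> Prop) (E : etrans X Theta -> Prop) : Prop :=
  E (e_id X Theta) /\
  (forall T U, E T -> E U -> E (e_comp T U)) /\
  (forall T, E T -> exists U, E U /\ e_comp T U = e_id X Theta
                                 /\ e_comp U T = e_id X Theta) /\
  (forall T th, E T -> S th -> S (e_th T th) /\ maps_to Sol th (e_th T th) (e_res T)).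

Definition uniformly_semi_normalized (X Theta : Type) (S : Theta -> Prop)
  (Sol : Theta -> (X -> Prop) -> Prop) (E : etrans X Theta -> Prop)
  (N : Theta -> ptrans X -> Prop) : Prop :=
  (forall th, S th -> is_subgroup (N th) (sym_group Sol th)) /\
  (forall th T, S th -> E T -> T <> e_id X Theta -> ~ N th (e_res T)) /\
  (forall th T, S th -> E T ->
     forall psi, N (e_th T th) psi <->
       exists n, N th n /\ psi = pt_comp (e_res T) (pt_comp n (pt_inv (e_res T)))) /\
  (forall th1 th2 phi, equiv_groupoid S Sol th1 th2 phi ->
     exists phi1 phi2 T, N th1 phi1 /\ N th2 phi2 /\ E T /\
       th2 = e_th T th1 /\ phi = pt_comp phi2 (pt_comp (e_res T) phi1)).

Definition ess_group (X Theta : Type) (Sol : Theta -> (X -> Prop) -> Prop)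
  (E : etrans X Theta -> Prop) (th : Theta) : ptrans X -> Prop :=
  fun phi => (exists T, E T /\ phi = e_res T) /\ sym_group Sol th phi.

(* Condition (3) applied to a symmetry g of L_θ, viewed as an element (θ, θ, g)
   of the equivalence groupoid, gives g = n2 ∘ T| ∘ n1 with n1, n2 ∈ N_θ and
   Tθ = θ; by condition (2), n2 = T| n T|^-1 for some n ∈ N_θ, so g = T| ∘ n n1.
   Hence every symmetry factors as an essential symmetry T| times an element
   of N_θ.  Conjugating N_θ by such a product lands in N_{Tθ} = N_θ, which is
   normality, and condition (1) makes the two factors intersect trivially. *)
From Stdlib Require Import Classical FunctionalExtensionality ProofIrrelevance.

Set Implicit Arguments.

Section PointTransformations.

Variable X : Type.

Lemma pt_eq (f g : ptrans X) : (forall x, pt_fwd f x = pt_fwd g x) -> f = g.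
Proof.
  intro Hfg.
  assert (Hbwd : forall y, pt_bwd f y = pt_bwd g y).
  { intro y. rewrite <- (pt_fwdK g (pt_bwd f y)), <- Hfg, pt_bwdK. reflexivity. }
  destruct f as [f1 f2 f3 f4], g as [g1 g2 g3 g4]; simpl in *.
  assert (f1 = g1) by (apply functional_extensionality; auto).
  assert (f2 = g2) by (apply functional_extensionality; auto).
  subst. f_equal; apply proof_irrelevance.
Qed.

Lemma pt_inv_unique (f g : ptrans X) : pt_comp f g = pt_id X -> g = pt_inv f.
Proof.
  intro Hfg. apply pt_eq; intro x; simpl.
  rewrite <- (pt_fwdK f (pt_fwd g x)).
  change (pt_bwd f (pt_fwd (pt_comp f g) x) = pt_bwd f x).
  rewrite Hfg. reflexivity.
Qed.

Lemma pt_image_comp (f g : ptrans X) (s : X -> Prop) :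
  pt_image (pt_comp f g) s = pt_image f (pt_image g s).
Proof. reflexivity. Qed.

Lemma pt_imageK (f : ptrans X) (s : X -> Prop) :
  pt_image f (pt_image (pt_inv f) s) = s.
Proof.
  apply functional_extensionality; intro y. unfold pt_image; simpl.
  rewrite pt_bwdK. reflexivity.
Qed.

End PointTransformations.

Section SymmetryGroup.

Variables (X Theta : Type) (Sol : Theta -> (X -> Prop) -> Prop).

Lemma maps_to_comp (th1 th2 th3 : Theta) (f g : ptrans X) :
  maps_to Sol th2 th3 f -> maps_to Sol th1 th2 g ->
  maps_to Sol th1 th3 (pt_comp f g).
Proof. intros Hf Hg s. rewrite pt_image_comp, (Hg s), (Hf (pt_image g s)). tauto. Qed.

Lemma sym_group_is_subgroup (th : Theta) :
  is_subgroup (sym_group Sol th) (sym_group Sol th).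
Proof.
  split; [auto|]. split; [|split].
  - intro s. tauto.
  - intros g h Hg Hh. exact (maps_to_comp Hg Hh).
  - intros g Hg s. rewrite (Hg (pt_image (pt_inv g) s)), pt_imageK. tauto.
Qed.

End SymmetryGroup.

Section SemiNormalizedClass.

Variables (X Theta : Type) (S : Theta -> Prop)
  (Sol : Theta -> (X -> Prop) -> Prop) (E : etrans X Theta -> Prop)
  (N : Theta -> ptrans X -> Prop).

Hypothesis HE : is_equiv_group S Sol E.
Hypothesis HN : uniformly_semi_normalized S Sol E N.

Variable th : Theta.
Hypothesis Sth : S th.

Lemma ess_group_is_subgroup : is_subgroup (ess_group Sol E th) (sym_group Sol th).
Proof.
  destruct HE as [E1 [EC [EV _]]].
  destruct (sym_group_is_subgroup Sol th) as [_ [G1 [GC GV]]].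
  split; [intros g [_ Hg]; exact Hg|]. split; [|split].
  - split; [|exact G1]. exists (e_id X Theta); auto.
  - intros g h [[T [HT ->]] Hg] [[U [HU ->]] Hh]. split; [|auto].
    exists (e_comp T U); auto.
  - intros g [[T [HT ->]] Hg]. split; [|auto].
    destruct (EV T HT) as [U [HU [HTU _]]]. exists U; split; [exact HU|].
    symmetry; apply pt_inv_unique.
    change (e_res (e_comp T U) = e_res (e_id X Theta)). rewrite HTU; reflexivity.
Qed.

Lemma stabilizer_res_in_ess_group (T : etrans X Theta) :
  E T -> e_th T th = th -> ess_group Sol E th (e_res T).
Proof.
  intros HT Hfix. destruct HE as [_ [_ [_ EM]]].
  split; [exists T; auto|].
  destruct (EM T th HT Sth) as [_ Hmaps]. unfold sym_group. rewrite Hfix in Hmaps. exact Hmaps.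
Qed.

Lemma stabilizer_conj_normal_subgroup (T : etrans X Theta) (n : ptrans X) :
  E T -> e_th T th = th -> N th n ->
  N th (pt_comp (e_res T) (pt_comp n (pt_inv (e_res T)))).
Proof.
  intros HT Hfix Hn. destruct HN as [_ [_ [Hconj _]]].
  rewrite <- Hfix at 1. apply (Hconj th T Sth HT). eauto.
Qed.

Lemma sym_group_factor (g : ptrans X) : sym_group Sol th g ->
  exists T n, E T /\ e_th T th = th /\ N th n /\ g = pt_comp (e_res T) n.
Proof.
  intro Hg. destruct HN as [Nsub [_ [Hconj Hgroupoid]]].
  destruct (Nsub th Sth) as [_ [_ [NC _]]].
  destruct (Hgroupoid th th g (conj Sth (conj Sth Hg)))
    as [n1 [n2 [T [Hn1 [Hn2 [HT [Hfix ->]]]]]]].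
  rewrite Hfix in Hn2. apply (Hconj th T Sth HT) in Hn2.
  destruct Hn2 as [n [Hn ->]].
  exists T, (pt_comp n n1). repeat split; auto.
  apply pt_eq; intro x; simpl. rewrite pt_fwdK. reflexivity.
Qed.

Lemma normal_subgroup_sym_group : is_normal_subgroup (N th) (sym_group Sol th).
Proof.
  destruct HN as [Nsub _]. split; [exact (Nsub th Sth)|].
  destruct (Nsub th Sth) as [_ [_ [NC NV]]].
  intros g n Hg Hn.
  destruct (sym_group_factor Hg) as [T [m [HT [Hfix [Hm ->]]]]].
  assert (Hmnm : N th (pt_comp m (pt_comp n (pt_inv m)))) by auto.
  replace (pt_comp (pt_comp (e_res T) m) (pt_comp n (pt_inv (pt_comp (e_res T) m))))
    with (pt_comp (e_res T) (pt_comp (pt_comp m (pt_comp n (pt_inv m))) (pt_inv (e_res T))))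
    by (apply pt_eq; reflexivity).
  exact (stabilizer_conj_normal_subgroup HT Hfix Hmnm).
Qed.

Lemma ess_group_normal_subgroup_trivial (g : ptrans X) :
  ess_group Sol E th g -> N th g -> g = pt_id X.
Proof.
  intros [[T [HT ->]] _] Hn. destruct HN as [_ [Htriv _]].
  destruct (classic (T = e_id X Theta)) as [->|Hne]; [reflexivity|].
  exfalso. exact (Htriv th T Sth HT Hne Hn).
Qed.

End SemiNormalizedClass.

Theorem theorem1 (X Theta : Type) (S : Theta -> Prop)
  (Sol : Theta -> (X -> Prop) -> Prop) (E : etrans X Theta -> Prop)
  (N : Theta -> ptrans X -> Prop) :
  is_equiv_group S Sol E ->
  uniformly_semi_normalized S Sol E N ->
  forall th, S th ->
    is_normal_subgroup (N th) (sym_group Sol th) /\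
    is_subgroup (ess_group Sol E th) (sym_group Sol th) /\
    is_semidirect (sym_group Sol th) (ess_group Sol E th) (N th).
Proof.
  intros HE HN th Sth.
  pose proof (normal_subgroup_sym_group HN th Sth) as Hnormal.
  pose proof (ess_group_is_subgroup HE th) as Hess.
  do 2 (split; [assumption|]). do 2 (split; [assumption|]).
  split; [exact (ess_group_normal_subgroup_trivial HN Sth)|].
  intro g; split.
  - intro Hg. destruct (sym_group_factor HN Sth Hg) as [T [n [HT [Hfix [Hn ->]]]]].
    exists (e_res T), n. split; [exact (stabilizer_res_in_ess_group HE Sth T HT Hfix)|auto].
  - destruct (sym_group_is_subgroup Sol th) as [_ [_ [GC _]]].
    destruct Hnormal as [[NG _] _].
    intros [h [n [[_ Hh] [Hn ->]]]]. exact (GC h n Hh (NG n Hn)).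
Qed.
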